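(* Let $G$ be a connected graph. The following are equivalent: (1) $G$ is a tree; (2) any two $\mathbb{T}$-gain graphs on $G$ are $\mathbb{T}$-cospectral; (3) the adjacency matrices of any two $\mathbb{T}$-gain graphs on $G$ have the same spectral radius.
   Context: Graphs are finite, simple and undirected. $\mathbb{T}=\{z\in\mathbb{C}:|z|=1\}$. A $\mathbb{T}$-gain on $G$ is a map $\varphi$ from oriented edges $\overrightarrow{e_{st}}$ of $G$ to $\mathbb{T}$ with $\varphi(\overrightarrow{e_{ts}})=\varphi(\overrightarrow{e_{st}})^{-1}$; $\Phi=(G,\varphi)$ is a $\mathbb{T}$-gain graph, and its adjacency matrix $A(\Phi)$ is the Hermitian matrix with $(s,t)$ entry $\varphi(\overrightarrow{e_{st}})$ if $v_s\sim v_t$, else $0$. $\mathbb{T}$-cospectral means the adjacency matrices have the same spectrum. *)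

From HB Require Import structures.
From mathcomp Require Import all_boot all_order all_algebra.
From mathcomp Require Import reals.
From mathcomp Require Import complex.
Set Implicit Arguments. Unset Strict Implicit. Unset Printing Implicit Defensive.
Import Order.TTheory GRing.Theory Num.Theory.
Local Open Scope ring_scope.

Definition simple_graph (n : nat) (e : rel 'I_n) : Prop :=
  symmetric e /\ irreflexive e.

Definition connected_graph (n : nat) (e : rel 'I_n) : Prop :=
  (0 < n)%N /\ forall i j : 'I_n, connect e i j.

Definition has_cycle (n : nat) (e : rel 'I_n) : Prop :=
  exists c : seq 'I_n, (2 < size c)%N /\ cycle e c /\ uniq c.

Definition is_tree (n : nat) (e : rel 'I_n) : Prop :=
  connected_graph e /\ ~ has_cycle e.

(* A T-gain on the graph: phi s t is the gain of the oriented edge s -> t,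
   unimodular, with phi t s = (phi s t)^-1.  Values on non-edges are irrelevant. *)
Definition is_T_gain (R : rcfType) (n : nat) (e : rel 'I_n)
    (phi : 'I_n -> 'I_n -> R[i]) : Prop :=
  forall s t : 'I_n, e s t -> `|phi s t| = 1 /\ phi t s = (phi s t)^-1.

Definition gain_adj (R : rcfType) (n : nat) (e : rel 'I_n)
    (phi : 'I_n -> 'I_n -> R[i]) : 'M[R[i]]_n :=
  \matrix_(s, t) (if e s t then phi s t else 0).

Definition cospectral (R : rcfType) (n : nat) (A B : 'M[R[i]]_n) : Prop :=
  forall z : R[i], mup z (char_poly A) = mup z (char_poly B).

Definition is_spectral_radius (R : rcfType) (n : nat) (A : 'M[R[i]]_n) (r : R[i]) : Prop :=
  (exists2 z, eigenvalue A z & `|z| = r) /\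
  (forall z, eigenvalue A z -> `|z| <= r).

From HB Require Import structures.
From mathcomp Require Import all_boot all_order all_algebra.
From mathcomp Require Import reals.
From mathcomp Require Import complex.
From mathcomp Require Import zify ring.
Set Implicit Arguments. Unset Strict Implicit. Unset Printing Implicit Defensive.
Import Order.TTheory GRing.Theory Num.Theory.
Local Open Scope ring_scope.

(* On a tree every T-gain is switching equivalent to the trivial gain: if d v is
   the gain of a fixed walk from a root to v, acyclicity gives every closed walk
   gain 1, hence phi s t = (d s)^-1 * d t and A(G, phi) is diagonally similar to
   A(G).  Conversely, if G has a cycle, give one edge of it the gain i.  Were lam
   an eigenvalue of A(G, phi) with |lam| = rho(A(G)) and eigenvector x, the
   Rayleigh quotient would make |x| a Perron vector of A(G), nowhere zero by
   connectivity, and equality in the triangle inequality would give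
   x_s phi_st / |x_s| = (lam / rho) x_t / |x_t| on every edge.  Every closed walk
   would then have gain (lam / rho)^length, and going back and forth along an
   edge shows that this gain squares to 1, which i does not. *)

Section WalkGain.
Variables (F : fieldType) (T : eqType) (phi : T -> T -> F).

Fixpoint walk_gain (a : T) (p : seq T) : F :=
  if p is b :: p' then phi a b * walk_gain b p' else 1.

Lemma walk_gain_cat a p q :
  walk_gain a (p ++ q) = walk_gain a p * walk_gain (last a p) q.
Proof. by elim: p a => [|b p IHp] a /=; rewrite ?mul1r // IHp mulrA. Qed.

Lemma walk_gain_rcons1 a p b :
  (forall s t, s \in a :: p -> phi s t = 1) -> walk_gain a (rcons p b) = 1.
Proof.
elim: p a => [|c p IHp] a phi1 /=; first by rewrite phi1 ?mem_head // mulr1.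
by rewrite phi1 ?mem_head // mul1r IHp // => s t sp; apply: phi1; rewrite inE sp orbT.
Qed.

Variable e : rel T.
Hypothesis gain_inv : forall s t, e s t -> phi t s = (phi s t)^-1.
Hypothesis gain_neq0 : forall s t, e s t -> phi s t != 0.

Lemma walk_gain_neq0 a p : path e a p -> walk_gain a p != 0.
Proof.
elim: p a => [|b p IHp] a /=; first by rewrite oner_eq0.
by case/andP=> eab pb; rewrite mulf_neq0 ?gain_neq0 ?IHp.
Qed.

Lemma walk_gain_rev a p :
  path e a p -> walk_gain (last a p) (rev (belast a p)) = (walk_gain a p)^-1.
Proof.
elim: p a => [|b p IHp] a /=; first by rewrite invr1.
case/andP=> eab pb; rewrite rev_cons -cats1 walk_gain_cat IHp //= mulr1.
have -> : last (last b p) (rev (belast b p)) = b.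
  by case: p {IHp pb} => [|c p] //=; rewrite rev_cons last_rcons.
by rewrite gain_inv // invfM mulrC.
Qed.

Lemma walk_gain_phase (om : F) (u : T -> F) a p :
  (forall s t, e s t -> u s * phi s t = om * u t) -> path e a p ->
  u a * walk_gain a p = om ^+ size p * u (last a p).
Proof.
move=> phase; elim: p a => [|b p IHp] a /=; first by rewrite mulr1 mul1r.
by case/andP=> eab pb; rewrite mulrA phase // -mulrA IHp // exprS mulrA.
Qed.

Lemma phase_closed_walk_gain_sqr (om : F) (u : T -> F) a p :
  symmetric e -> (forall s, u s != 0) ->
  (forall s t, e s t -> u s * phi s t = om * u t) ->
  path e a p -> last a p = a -> walk_gain a p ^+ 2 = 1.
Proof.
move=> e_sym u_neq0 phase pa closed_p.
have closed_gain q : path e a q -> last a q = a -> walk_gain a q = om ^+ size q.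
  move=> qa lastq; apply: (mulfI (u_neq0 a)).
  by rewrite (walk_gain_phase phase) // lastq mulrC.
case: p pa closed_p => [|b p] pa closed_p; first by rewrite expr1n.
have eab : e a b by case/andP: pa.
have om2 : om ^+ 2 = 1.
  have back_forth : path e a [:: b; a] by rewrite /= eab e_sym eab.
  by rewrite -(closed_gain _ back_forth) //= mulr1 (gain_inv eab) mulfV ?gain_neq0.
by rewrite closed_gain // -exprM mulnC exprM om2 expr1n.
Qed.

End WalkGain.

Lemma nuniq_split (T : eqType) (s : seq T) :
  ~~ uniq s -> exists p1 x p2 p3, s = p1 ++ x :: p2 ++ x :: p3.
Proof.
elim: s => [|y s IHs] //=; rewrite negb_and negbK => /orP[ys|/IHs[p1 [x [p2 [p3 ->]]]]].
  by case/splitPr: ys => p2 p3; exists [::], y, p2, p3.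
by exists (y :: p1), x, p2, p3.
Qed.

Section AcyclicGain.
Variables (n : nat) (e : rel 'I_n) (F : fieldType) (phi : 'I_n -> 'I_n -> F).
Hypotheses (e_irr : irreflexive e) (e_acyclic : ~ has_cycle e).
Hypothesis gain_inv : forall s t, e s t -> phi t s = (phi s t)^-1.
Hypothesis gain_neq0 : forall s t, e s t -> phi s t != 0.

Lemma uniq_closed_walk_gain a p :
  path e a p -> last a p = a -> uniq p -> walk_gain phi a p = 1.
Proof.
case: p => [|b [|c [|d q]]] //= pa closed_p uniq_p.
- by move: pa; rewrite -closed_p e_irr.
- by move: pa => /and3P[eab _ _]; rewrite closed_p mulr1 (gain_inv eab) mulfV ?gain_neq0.
- exfalso; apply: e_acyclic; exists [:: b, c, d & q]; split=> //; split=> //.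
  by rewrite (cycle_path a) /= closed_p.
Qed.

Lemma acyclic_closed_walk_gain a p :
  path e a p -> last a p = a -> walk_gain phi a p = 1.
Proof.
have [k] := ubnP (size p); elim: k => // k IHk in a p *; rewrite ltnS => size_p pa closed_p.
have [|/nuniq_split[p1 [x [p2 [p3 def_p]]]]] := boolP (uniq p).
  exact: uniq_closed_walk_gain.
have {}def_p : p = rcons p1 x ++ rcons p2 x ++ p3 by rewrite def_p -!cats1 -!catA.
move: pa closed_p size_p; rewrite def_p !cat_path !last_cat !last_rcons.
rewrite !size_cat !size_rcons => /and3P[pa1 px2 px3] closed_p size_p.
have loop_x : walk_gain phi x (rcons p2 x) = 1.
  by apply: IHk; rewrite ?last_rcons // size_rcons; lia.
have shortcut : walk_gain phi a (rcons p1 x ++ p3) = 1.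
  by apply: IHk; rewrite ?cat_path ?pa1 ?last_cat ?last_rcons // size_cat size_rcons; lia.
by rewrite -shortcut !walk_gain_cat !last_rcons loop_x mul1r.
Qed.

Lemma acyclic_gain_switching : symmetric e -> connected_graph e ->
  exists2 d : 'I_n -> F,
    (forall i, d i != 0) & forall s t, e s t -> phi s t = (d s)^-1 * d t.
Proof.
move=> e_sym [n_gt0 e_conn]; pose r := Ordinal n_gt0.
have walk_to v : exists p, path e r p && (last r p == v).
  by case/connectP: (e_conn r v) => p pr ->; exists p; rewrite pr eqxx.
pose w v := xchoose (walk_to v).
have [w_path w_last] : (forall v, path e r (w v)) /\ (forall v, last r (w v) = v).
  by split=> v; case/andP: (xchooseP (walk_to v)) => // _ /eqP.
pose d v := walk_gain phi r (w v).
have d_neq0 v : d v != 0 by apply: (walk_gain_neq0 gain_neq0).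
exists d => // s t est.
have back_t : path e t (rev (belast r (w t))).
  by rewrite -{1}(w_last t) rev_path (eq_path (e' := e)) // => u v; rewrite e_sym.
have closed_gain : walk_gain phi r (w s ++ t :: rev (belast r (w t))) = 1.
  apply: acyclic_closed_walk_gain; first by rewrite cat_path w_path /= w_last est.
  rewrite last_cat /= -{1}(w_last t).
  by case: (w t) => [|? ?] //=; rewrite rev_cons last_rcons.
have rev_gain := walk_gain_rev gain_inv (w_path t); rewrite w_last in rev_gain.
move: closed_gain; rewrite walk_gain_cat w_last /= rev_gain -/(d s) -/(d t) mulrA.
by move/divr1_eq <-; rewrite mulKf.
Qed.
End AcyclicGain.

Lemma char_poly_diag_conj (F : fieldType) n (A B : 'M[F]_n) (d : 'I_n -> F) :
  (forall i, d i != 0) -> (forall s t, B s t = (d s)^-1 * A s t * d t) ->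
  char_poly B = char_poly A.
Proof.
move=> d_neq0 dAd; rewrite /char_poly; pose D (f : 'I_n -> F) := diag_mx (\row_i (f i)%:P).
have -> : char_poly_mx B = D (fun i => (d i)^-1) *m char_poly_mx A *m D d.
  apply/matrixP => s t; rewrite mul_mx_diag mul_diag_mx !mxE dAd.
  have [<-|_] := eqVneq s t; last by rewrite !mulr0n !sub0r mulrN mulNr -!polyCM.
  rewrite !mulr1n mulrAC mulVf // mul1r.
  by rewrite mulrAC -polyCM mulVf // polyC1 mul1r.
rewrite !det_mulmx !det_diag mulrC mulrA -big_split /=.
by rewrite big1 ?mul1r // => i _; rewrite !mxE -polyCM divff.
Qed.

Definition adjmx {R : rcfType} n (e : rel 'I_n) : 'M[R[i]]_n :=
  gain_adj e (fun _ _ => 1).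

Lemma T_gain1 {R : rcfType} n (e : rel 'I_n) : is_T_gain e (fun _ _ => 1 : R[i]).
Proof. by move=> s t _; rewrite normr1 invr1. Qed.

Section TGain.
Variables (R : rcfType) (n : nat) (e : rel 'I_n) (phi : 'I_n -> 'I_n -> R[i]).
Hypothesis phiT : is_T_gain e phi.

Lemma T_gain_inv s t : e s t -> phi t s = (phi s t)^-1.
Proof. by case/phiT. Qed.

Lemma T_gain_neq0 s t : e s t -> phi s t != 0.
Proof. by case/phiT => phi1 _; rewrite -normr_eq0 phi1 oner_eq0. Qed.

Lemma norm_gain_adj s t : `|gain_adj e phi s t| = adjmx e s t.
Proof. by rewrite !mxE; case: ifP => [/phiT[]|_]; rewrite ?normr0. Qed.

Lemma tree_gain_adj_char_poly :
  simple_graph e -> is_tree e -> char_poly (gain_adj e phi) = char_poly (adjmx e).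
Proof.
move=> [e_sym e_irr] [conn_e e_acyclic].
have [d d_neq0 phi_d] :=
  acyclic_gain_switching e_irr e_acyclic T_gain_inv T_gain_neq0 e_sym conn_e.
apply: (char_poly_diag_conj d_neq0) => s t; rewrite !mxE.
by case: ifP => est; rewrite ?mulr0 ?mul0r // mulr1 phi_d.
Qed.

End TGain.

Lemma eigenvalue_mup (F : fieldType) n (A : 'M[F]_n) z :
  eigenvalue A z = (0 < mup z (char_poly A))%N.
Proof.
by rewrite eigenvalue_root_char mup_geq ?monic_neq0 ?char_poly_monic // expr1 dvdp_XsubCl.
Qed.

Lemma eq_spectral_radius (R : rcfType) n (A B : 'M[R[i]]_n) r :
  eigenvalue A =1 eigenvalue B -> is_spectral_radius A r -> is_spectral_radius B r.
Proof.
move=> eigAB [[z ez nz] r_max]; split=> [|y]; first by exists z; rewrite -?eigAB.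
by rewrite -eigAB; apply: r_max.
Qed.

Lemma cospectral_spectral_radius (R : rcfType) n (A B : 'M[R[i]]_n) r :
  cospectral A B -> is_spectral_radius A r <-> is_spectral_radius B r.
Proof.
move=> AB; have eigAB : eigenvalue A =1 eigenvalue B.
  by move=> z; rewrite !eigenvalue_mup AB.
by split; apply: eq_spectral_radius => z; rewrite eigAB.
Qed.

Lemma seq_max_norm (C : numDomainType) (s : seq C) :
  s != [::] -> exists2 z, z \in s & {in s, forall y, `|y| <= `|z|}.
Proof.
elim: s => [//|a s IHs] _.
have [->|/IHs[z zs z_max]] := eqVneq s [::].
  by exists a => [|y]; rewrite ?mem_head // inE => /eqP ->.
have [az|za] := orP (real_leVge (normr_real a) (normr_real z)).
  exists z; first by rewrite inE zs orbT.
  by move=> y; rewrite inE => /predU1P[->|/z_max].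
exists a; first exact: mem_head.
by move=> y; rewrite inE => /predU1P[->|/z_max/le_trans]; last exact.
Qed.

Lemma spectral_radius_exists (R : rcfType) n (A : 'M[R[i]]_n) :
  (0 < n)%N -> exists r, is_spectral_radius A r.
Proof.
move=> n_gt0; have [s char_s] := closed_field_poly_normal (char_poly A).
have eigE z : eigenvalue A z = (z \in s).
  rewrite eigenvalue_root_char char_s (monicP (char_poly_monic A)) scale1r.
  exact: root_prod_XsubC.
have [z0 ez0] := eigenvalue_closed A n_gt0.
have [|z zs z_max] := @seq_max_norm _ s.
  by apply/eqP => s0; rewrite eigE s0 in ez0.
exists `|z|; split=> [|y]; first by exists z; rewrite ?eigE.
by rewrite eigE; apply: z_max.
Qed.

Local Open Scope sesquilinear_scope.

Section Rayleigh.
Variables (C : numClosedFieldType) (n : nat).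

Lemma diag_conj_eigenvalue (A P : 'M[C]_n) (mu : 'rV[C]_n) i :
  P \in unitmx -> A = invmx P *m diag_mx mu *m P -> eigenvalue A (mu 0 i).
Proof.
move=> P_unit ->; apply/eigenvalueP; exists (delta_mx 0 i *m P).
  rewrite !mulmxA mulmxK // scalemxAl; congr (_ *m _).
  apply/rowP => j; rewrite mul_mx_diag !mxE.
  by have [->|] := eqVneq j i; rewrite ?andbF ?mul0r ?mulr0 // mulrC.
apply/negP => /eqP/(congr1 (mulmx^~ (invmx P))).
by rewrite mulmxK // mul0mx => /rowP/(_ i)/eqP; rewrite !mxE !eqxx oner_eq0.
Qed.

Lemma diag_rayleigh_max (mu : 'rV[C]_n) (r : C) (w : 'rV[C]_n) :
  (forall j, mu 0 j <= r) ->
  r * (w *m w ^t*) 0 0 <= (w *m diag_mx mu *m w ^t*) 0 0 ->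
  w *m diag_mx mu = r *: w.
Proof.
move=> mu_le; rewrite !mxE; under [X in _ <= X]eq_bigr do rewrite mul_mx_diag mxE.
rewrite mulr_sumr -subr_ge0 -sumrB => gap.
have term_ge0 j : 0 <= (r - mu 0 j) * `|w 0 j| ^+ 2.
  by rewrite mulr_ge0 ?subr_ge0 ?exprn_ge0.
have terms0 : \sum_j (r - mu 0 j) * `|w 0 j| ^+ 2 = 0.
  apply/eqP; rewrite eq_le sumr_ge0 ?andbT // -oppr_ge0 -sumrN.
  apply: le_trans gap _; apply: ler_sum => k _; rewrite !mxE normCK.
  by have -> : - ((r - mu 0 k) * (w 0 k * (w 0 k)^*)) =
                w 0 k * mu 0 k * (w 0 k)^* - r * (w 0 k * (w 0 k)^*) by ring.
have term0 j : (r - mu 0 j) * `|w 0 j| ^+ 2 = 0.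
  exact: (psumr_eq0P (fun j _ => term_ge0 j) terms0).
apply/rowP => j; rewrite mul_mx_diag !mxE.
have /eqP := term0 j; rewrite mulf_eq0 subr_eq0 sqrf_eq0 normr_eq0.
by case/orP => /eqP ->; rewrite ?mulr0 ?mul0r // mulrC.
Qed.

Lemma hermitian_rayleigh_max (A : 'M[C]_n) (r : C) (v : 'rV[C]_n) :
  A \is hermsymmx -> (forall z, eigenvalue A z -> `|z| <= r) ->
  r * (v *m v ^t*) 0 0 <= (v *m A *m v ^t*) 0 0 -> v *m A = r *: v.
Proof.
move=> A_herm r_max; have A_eq := orthomx_spectralP (hermitian_normalmx A_herm).
set P := spectralmx A in A_eq; set mu := spectral_diag A in A_eq.
have P_unit : P \in unitmx := spectral_unit A.
have invP : invmx P = P ^t* := invmx_unitary (spectral_unitarymx A).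
have mu_le j : mu 0 j <= r.
  apply: le_trans (r_max _ (diag_conj_eigenvalue j P_unit A_eq)).
  by apply: real_ler_norm; apply: (mxOverP (hermitian_spectral_diag_real A_herm)).
set w := v *m P ^t*.
have v_eq : v = w *m P by rewrite /w -invP mulmxKV.
have vt_eq : v ^t* = P ^t* *m w ^t* by rewrite v_eq trmx_mul map_mxM.
have PPt : P *m P ^t* = 1%:M by rewrite -invP mulmxV.
have wPPt : w *m P *m P ^t* = w by rewrite -mulmxA PPt mulmx1.
have vv : v *m v ^t* = w *m w ^t* by rewrite vt_eq {1}v_eq mulmxA wPPt.
have vAv : v *m A *m v ^t* = w *m diag_mx mu *m w ^t*.
  by rewrite vt_eq {1}v_eq A_eq invP !mulmxA wPPt -[_ *m P *m P ^t*]mulmxA PPt mulmx1.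
rewrite vv vAv => /(diag_rayleigh_max mu_le) wD.
by rewrite {1}v_eq A_eq invP !mulmxA wPPt wD -scalemxAl -v_eq.
Qed.
End Rayleigh.

Lemma adjmx_ge0 (R : rcfType) n (e : rel 'I_n) s t : 0 <= adjmx (R := R) e s t.
Proof. by rewrite mxE; case: ifP. Qed.

Lemma adjmx_herm (R : rcfType) n (e : rel 'I_n) :
  symmetric e -> adjmx (R := R) e \is hermsymmx.
Proof.
move=> e_sym; apply/is_hermitianmxP; apply/matrixP => s t.
by rewrite expr0 scale1r !mxE e_sym; case: ifP; rewrite ?conjC1 ?conjC0.
Qed.

Section PerronPhase.
Variables (R : rcfType) (n : nat) (e : rel 'I_n).
Hypotheses (e_sym : symmetric e) (e_conn : forall i j, connect e i j).
Variables (phi : 'I_n -> 'I_n -> R[i]) (r lam : R[i]) (x : 'rV[R[i]]_n).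
Hypotheses (phiT : is_T_gain e phi)
  (r_max : forall z, eigenvalue (adjmx e) z -> `|z| <= r)
  (x_eigen : x *m gain_adj e phi = lam *: x) (x_neq0 : x != 0) (lam_r : `|lam| = r).

Local Notation absx := (\row_j `|x 0 j|).

Lemma eigenvector_col t : \sum_s x 0 s * gain_adj e phi s t = lam * x 0 t.
Proof. by have /rowP/(_ t) := x_eigen; rewrite !mxE. Qed.

(* |r x_t| = |(x A(G, phi))_t| <= (|x| A(G))_t: the Rayleigh quotient of |x| reaches r. *)
Lemma abs_eigenvector_perron : absx *m adjmx e = r *: absx.
Proof.
apply: hermitian_rayleigh_max (adjmx_herm _ e_sym) r_max _.
rewrite !mxE mulr_sumr; apply: ler_sum => t _.
rewrite !mxE geC0_conj ?normr_ge0 // mulrA ler_wpM2r //.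
under eq_bigr do rewrite mxE.
rewrite -lam_r -normrM -eigenvector_col; apply: le_trans (ler_norm_sum _ _ _) _.
by apply: ler_sum => s _; rewrite normrM norm_gain_adj.
Qed.

Lemma abs_eigenvector_col t : \sum_s `|x 0 s| * adjmx e s t = r * `|x 0 t|.
Proof.
by have /rowP/(_ t) := abs_eigenvector_perron; rewrite !mxE; under eq_bigr do rewrite mxE.
Qed.

Lemma abs_eigenvector_edge s t : e s t -> `|x 0 s| <= r * `|x 0 t|.
Proof.
move=> est; rewrite -abs_eigenvector_col (bigD1 s) //= mxE est mulr1 lerDl.
by apply: sumr_ge0 => u _; rewrite mulr_ge0 ?adjmx_ge0.
Qed.

Lemma eigenvector_neq0 t : x 0 t != 0.
Proof.
apply: contra x_neq0 => /eqP xt0; apply/eqP/rowP => u; rewrite mxE.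
pose zero := [pred v | x 0 v == 0].
have zero_closed : closed e zero.
  suff zero_edge v w : e v w -> x 0 w = 0 -> x 0 v = 0.
    move=> v w evw; rewrite !inE.
    by apply/eqP/eqP => [/zero_edge->|/zero_edge->] //; rewrite e_sym.
  move=> evw xw0; apply/normr0_eq0/le_anti; rewrite normr_ge0 andbT.
  by have := abs_eigenvector_edge evw; rewrite xw0 normr0 mulr0.
by have := closed_connect zero_closed (e_conn t u); rewrite !inE xt0 eqxx => /esym/eqP.
Qed.

Lemma eigenvector_phase s t :
  e s t -> x 0 s / `|x 0 s| * phi s t = lam / r * (x 0 t / `|x 0 t|).
Proof.
move=> est; have xs_pos : 0 < `|x 0 s| by rewrite normr_gt0 eigenvector_neq0.
have xt_neq0 : `|x 0 t| != 0 by rewrite normr_eq0 eigenvector_neq0.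
have r_neq0 : r != 0.
  apply: contraTneq (abs_eigenvector_edge est) => ->.
  by rewrite mul0r; apply/negP => /(lt_le_trans xs_pos); rewrite ltxx.
(* Equality in |sum_u x_u A_ut| <= sum_u |x_u| A(G)_ut: all x_u A_ut share one phase. *)
have [tau _ tauE] : {tau : R[i] | `|tau| == 1 &
    forall u, xpredT u -> x 0 u * gain_adj e phi u t = `|x 0 u * gain_adj e phi u t| * tau}.
  apply: normC_sum_eq; rewrite eigenvector_col normrM lam_r -abs_eigenvector_col.
  by apply: eq_bigr => u _; rewrite normrM norm_gain_adj.
have tau_eq : lam * x 0 t = r * `|x 0 t| * tau.
  rewrite -eigenvector_col -abs_eigenvector_col mulr_suml.
  by apply: eq_bigr => u _; rewrite tauE // normrM norm_gain_adj.
have := tauE s isT; rewrite normrM norm_gain_adj // !mxE est mulr1 => xs_eq.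
rewrite mulrAC xs_eq mulrAC divff ?mul1r ?lt0r_neq0 //.
by rewrite mulf_div tau_eq mulrAC divff ?mul1r // mulf_neq0.
Qed.

End PerronPhase.

Lemma spectral_radius_closed_walk_gain (R : rcfType) n (e : rel 'I_n)
    (phi : 'I_n -> 'I_n -> R[i]) r a p :
  symmetric e -> (forall i j, connect e i j) -> is_T_gain e phi ->
  is_spectral_radius (adjmx e) r -> is_spectral_radius (gain_adj e phi) r ->
  path e a p -> last a p = a -> walk_gain phi a p ^+ 2 = 1.
Proof.
move=> e_sym e_conn phiT [_ r_max] [[lam /eigenvalueP[x x_eigen x_neq0] lam_r] _].
have x_entry_neq0 := eigenvector_neq0 e_sym e_conn phiT r_max x_eigen x_neq0 lam_r.
apply: (phase_closed_walk_gain_sqr (T_gain_inv phiT) (T_gain_neq0 phiT) e_sym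
         (u := fun s => x 0 s / `|x 0 s|)).
  by move=> s; rewrite mulf_neq0 ?invr_eq0 ?normr_eq0 ?x_entry_neq0.
exact: (eigenvector_phase e_sym e_conn phiT r_max x_eigen x_neq0 lam_r).
Qed.

Definition edge_twist (F : fieldType) n (a b : 'I_n) (z : F) (s t : 'I_n) : F :=
  if (s == a) && (t == b) then z else if (s == b) && (t == a) then z^-1 else 1.

Lemma edge_twist_T_gain (R : rcfType) n (e : rel 'I_n) (a b : 'I_n) (z : R[i]) :
  a != b -> `|z| = 1 -> is_T_gain e (edge_twist a b z).
Proof.
move=> ab z1 s t _; rewrite /edge_twist [(t == a) && _]andbC [(t == b) && _]andbC.
case: ifP => [/andP[/eqP-> /eqP->]|_]; first by rewrite z1 (negPf ab).
by case: ifP => _; rewrite ?normfV ?z1 ?invr1 ?invrK ?normr1.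
Qed.

Lemma closed_walk_twisted_gain (R : rcfType) n (e : rel 'I_n) (z : R[i]) :
  has_cycle e -> `|z| = 1 ->
  exists phi : 'I_n -> 'I_n -> R[i], is_T_gain e phi /\
    exists a p, [/\ path e a p, last a p = a & walk_gain phi a p = z].
Proof.
move=> [cyc [size_cyc [cyc_e uniq_c]]] z1.
case: cyc size_cyc cyc_e uniq_c => [|a [|b [|c q]]] // _ cyc_e uniq_c.
move: uniq_c; rewrite !cons_uniq !in_cons !negb_or.
move=> /andP[/and3P[ab ac aq] /andP[/andP[bc bq] _]].
exists (edge_twist a b z); split; first exact: edge_twist_T_gain ab z1.
exists a, [:: b, c & rcons q a]; split=> //; first by rewrite /= last_rcons.
have twist1 s t : s != a -> s != b -> edge_twist a b z s t = 1.
  by move=> /negPf sa /negPf sb; rewrite /edge_twist sa sb.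
rewrite /= walk_gain_rcons1 => [|s t]; last first.
  by rewrite inE => /predU1P[->|sq]; apply: twist1; [rewrite eq_sym|rewrite eq_sym|
    apply: contraNneq aq => <-|apply: contraNneq bq => <-].
by rewrite /edge_twist !eqxx (eq_sym b) (negPf ab) /= (eq_sym c a) (negPf ac) !mulr1.
Qed.

Lemma tree_cospectral (R : rcfType) n (e : rel 'I_n) (phi psi : 'I_n -> 'I_n -> R[i]) :
  simple_graph e -> is_tree e -> is_T_gain e phi -> is_T_gain e psi ->
  cospectral (gain_adj e phi) (gain_adj e psi).
Proof.
by move=> simple_e tree_e phiT psiT z; rewrite !tree_gain_adj_char_poly.
Qed.

Lemma equal_spectral_radius_tree (R : rcfType) n (e : rel 'I_n) :
  simple_graph e -> connected_graph e ->
  (forall phi psi : 'I_n -> 'I_n -> R[i], is_T_gain e phi -> is_T_gain e psi ->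
     forall r, is_spectral_radius (gain_adj e phi) r <->
               is_spectral_radius (gain_adj e psi) r) ->
  is_tree e.
Proof.
move=> [e_sym _] [n_gt0 e_conn] same_radius; split=> // cyc.
have [phi [phiT [a [p [pa closed_p gain_i]]]]] := closed_walk_twisted_gain cyc (normCi R[i]).
have [r rG] := spectral_radius_exists (adjmx (R := R) e) n_gt0.
have rphi : is_spectral_radius (gain_adj e phi) r.
  exact: (same_radius _ _ phiT (@T_gain1 _ _ e) r).2 rG.
have := spectral_radius_closed_walk_gain e_sym e_conn phiT rG rphi pa closed_p.
rewrite gain_i sqrCi => /eqP; rewrite -subr_eq0 -opprD oppr_eq0.
by rewrite (_ : 1 + 1 = 2%:R) // pnatr_eq0.
Qed.

Theorem theorem3p4 (R : realType) (n : nat) (e : rel 'I_n) :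
  simple_graph e -> connected_graph e ->
  (is_tree e <->
     (forall phi psi : 'I_n -> 'I_n -> R[i],
        is_T_gain e phi -> is_T_gain e psi ->
        cospectral (gain_adj e phi) (gain_adj e psi))) /\
  (is_tree e <->
     (forall phi psi : 'I_n -> 'I_n -> R[i],
        is_T_gain e phi -> is_T_gain e psi ->
        forall r : R[i],
          is_spectral_radius (gain_adj e phi) r <->
          is_spectral_radius (gain_adj e psi) r)).
Proof.
move=> simple_e conn_e; split; split.
- by move=> tree_e phi psi; apply: tree_cospectral.
- move=> cospec; apply: (equal_spectral_radius_tree simple_e conn_e).
  by move=> phi psi phiT psiT r; apply/cospectral_spectral_radius/cospec.
- move=> tree_e phi psi phiT psiT r.
  exact/cospectral_spectral_radius/(tree_cospectral simple_e tree_e).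
- exact: (equal_spectral_radius_tree simple_e conn_e).
Qed.
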